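(* Assume (H1). Let $h\ge0$ be an integer, $\mathbf{a}\in\mathbb{N}^I[h]$ and $m\in\{0,\dots,n\}$. Then $$\mathbb{P}_n(A_{u(m)}=\mathbf{a})=\mathbb{Q}_h(\mathbf{a})\,\frac{\mathbb{P}\big(|\mathbf{f}_{N_1(\mathbf{a})}|=m-h,\ |\mathbf{f}'_{1+N_2(\mathbf{a})}|=n+1-m\big)}{\mathbb{P}(|\mathbf{T}|=n+1)},$$ where $\mathbf{f}$ and $\mathbf{f}'$ are independent random forests.
   Context: Planar trees: finite subsets $T$ of the set of finite words over $\{1,2,\dots\}$ containing the empty word $\emptyset$, with $ui\in T\Rightarrow u\in T$ and $uj\in T$ for $1\le j\le i$. $c_u(T)$ = number of children, $|u|$ = word length; vertices ordered lexicographically (prefixes first), $u(k)$ the $k$-th vertex, $u(0)=\emptyset$. $|T|$ is the number of vertices. (H1): $\mu=(\mu_k)_{k\ge0}$ probability on $\mathbb{N}$ with $\mu_0+\mu_1\ne1$, $\sum_kk\mu_k=1$, $\sum_{k\le K}\mu_k=1$ for some integer $K>0$. $\mathbf{T}$ is a Galton–Watson tree with offspring law $\mu$ and $\mathbb{P}_n=\mathbb{P}(\cdot\mid|\mathbf{T}|=n+1)$ (for $n$ with positive conditioning probability). For $k\ge0$, $\mathbf{f}_k=(\mathbf{T}^1,\dots,\mathbf{T}^k)$ is a forest of $k$ i.i.d. such GW trees, with size $|\mathbf{f}_k|=\sum_i|\mathbf{T}^i|$. $I_K=\{(k,j):1\le j\le k\le K\}$; $\mathbb{N}^I[h]$ is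 the set of $c\in\mathbb{N}^{I_K}$ with $\sum_{i\in I_K}c_i=h$; $\mathbb{Q}_h(\mathbf{a})=\binom{h}{(\mathbf{a}_i)_{i\in I_K}}\prod_{(k,j)\in I_K}\mu_k^{\mathbf{a}_{k,j}}$ for $\mathbf{a}\in\mathbb{N}^I[h]$ (the multinomial law with parameters $h$ and $p_{k,j}=\mu_k$). For $\mathbf{a}\in\mathbb{R}^{I_K}$, $N_1(\mathbf{a})=\sum_{(k,j)}(j-1)\mathbf{a}_{k,j}$ and $N_2(\mathbf{a})=\sum_{(k,j)}(k-j)\mathbf{a}_{k,j}$. Lineage: $A_u=(A_{u,k,j})_{(k,j)\in I_K}$, where $A_{u,k,j}$ is the number of strict ancestors $v$ of $u$ with $c_v=k$ such that $u$ is a descendant of (or equal to) $vj$. *)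

From HB Require Import structures.
From mathcomp Require Import all_boot all_order all_algebra finmap.
From mathcomp Require Import boolp classical_sets fsbigop reals.
Set Implicit Arguments. Unset Strict Implicit. Unset Printing Implicit Defensive.
Import Order.TTheory GRing.Theory Num.Theory.
Local Open Scope classical_set_scope.
Local Open Scope ring_scope.
Local Open Scope fset_scope.

(* Words over {1,2,...} are [seq nat]; the word "u i" is [rcons u i]. *)
Definition word := seq nat.
Definition ptree := {fset word}.

Definition is_tree (T : ptree) : Prop :=
  [::] \in T /\
  (forall u, u \in T -> all (fun i => 0 < i)%N u) /\
  (forall u i, rcons u i \in T -> u \in T /\ forall j, (1 <= j <= i)%N -> rcons u j \in T).

Definition nchildren (T : ptree) (u : word) : nat :=
  #|` [fset v in T | (size v == (size u).+1) && (take (size u) v == u)] |.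

Definition tree_size (T : ptree) : nat := #|` T|.

Fixpoint lexle (u v : word) : bool :=
  match u, v with
  | [::], _ => true
  | _ :: _, [::] => false
  | x :: u', y :: v' => (x < y)%N || ((x == y) && lexle u' v')
  end.

(* u(k): the k-th vertex of T in lexicographic order (u(0) = empty word) *)
Definition vertex (T : ptree) (k : nat) : word :=
  nth [::] (sort lexle (enum_fset T)) k.

(* A_{u,k,j}: number of strict ancestors v = take l u (l < |u|) of u with
   c_v(T) = k and such that u is a descendant of (or equal to) v j. *)
Definition lineage (T : ptree) (u : word) (k j : nat) : nat :=
  count (fun l => (nchildren T (take l u) == k) &&
                  (take l.+1 u == rcons (take l u) j)) (iota 0 (size u)).

Section GW.
Variable R : realType.
Variable mu : nat -> R.

Definition GWprob (t : ptree) : R := \prod_(u <- enum_fset t) mu (nchildren t u).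

(* P(T in E), E an event on finite trees (used only for events with finitely
   many trees, e.g. those fixing |T|) *)
Definition PrT (E : ptree -> Prop) : R :=
  \sum_(t \in [set t | is_tree t /\ E t]) GWprob t.

Definition fsize (f : seq ptree) : nat := \sum_(t <- f) tree_size t.
Definition is_forest (k : nat) (f : seq ptree) : Prop :=
  size f = k /\ forall t, t \in f -> is_tree t.
Definition forest_weight (f : seq ptree) : R := \prod_(t <- f) GWprob t.

(* P(|f_k| = x, |f'_k'| = y) for independent forests f_k, f'_k' of
   k (resp. k') i.i.d. GW trees; sizes compared in int. *)
Definition PrFF (k k' : nat) (x y : int) : R :=
  \sum_(p \in [set p : seq ptree * seq ptree |
                 [/\ is_forest k p.1, is_forest k' p.2,
                     (fsize p.1)%:Z = x & (fsize p.2)%:Z = y]])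
     (forest_weight p.1 * forest_weight p.2).
End GW.

Definition sumI (K : nat) (F : nat -> nat -> nat) : nat :=
  (\sum_(1 <= k < K.+1) \sum_(1 <= j < k.+1) F k j)%N.
Definition N1 (K : nat) (a : nat -> nat -> nat) : nat := sumI K (fun k j => (j - 1) * a k j)%N.
Definition N2 (K : nat) (a : nat -> nat -> nat) : nat := sumI K (fun k j => (k - j) * a k j)%N.

(* Q_h(a): multinomial law with parameters h and p_{k,j} = mu_k *)
Definition Qh (R : realType) (mu : nat -> R) (K h : nat) (a : nat -> nat -> nat) : R :=
  (h`!)%:R / (\prod_(1 <= k < K.+1) \prod_(1 <= j < k.+1) ((a k j)`!)%:R)
  * \prod_(1 <= k < K.+1) \prod_(1 <= j < k.+1) mu k ^+ a k j.

From HB Require Import structures.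
From mathcomp Require Import all_boot all_order all_algebra finmap.
From mathcomp Require Import boolp classical_sets functions fsbigop reals cardinality.
From mathcomp Require Import zify ring.
Import Order.TTheory GRing.Theory Num.Theory.
Set Implicit Arguments. Unset Strict Implicit. Unset Printing Implicit Defensive.
Local Open Scope ring_scope.
Local Open Scope classical_set_scope.

(** A tree is its root with [k] children carrying a forest of [k]
independent GW trees ("grafting").  If the [x+1]-st vertex lies in the [j]-th
subtree, its lineage is [e_(k,j)] plus its lineage inside that subtree, and the
[j-1] trees before it and the [k-j] trees after it only contribute their sizes.
Hence, writing [y] for the number of vertices after the chosen one,
[P(|T| = x+y+1, A_(u(x+1)) = a)] is a sum over [(k,j)] of [mu_k] times a
convolution of the same quantity at [(x - |f1|, y - |f2|, a - e_(k,j))] with the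
weights of two forests [f1, f2].  Induction on [h = sum a] turns this into the
multinomial recursion for [Q_h] and the concatenation of forests. *)

Lemma lexle_trans : transitive lexle.
Proof.
elim=> [|x u IH] [|y v] [|z w] //=.
move=> /orP[lt1|/andP[/eqP e1 l1]] /orP[lt2|/andP[/eqP e2 l2]]; apply/orP.
- by left; apply: ltn_trans lt1 lt2.
- by left; rewrite -e2.
- by left; rewrite e1.
- by right; rewrite e1 e2 eqxx (IH _ _ l1 l2).
Qed.

Lemma lexle_anti : antisymmetric lexle.
Proof.
elim=> [|x u IH] [|y v] //= /andP[/orP[lt1|/andP[/eqP e1 l1]] /orP[lt2|/andP[/eqP e2 l2]]].
- by move: (ltn_trans lt1 lt2); rewrite ltnn.
- by move: lt1; rewrite e2 ltnn.
- by move: lt2; rewrite e1 ltnn.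
- by rewrite e1 (IH v) // l1 l2.
Qed.

Lemma lexle_total : total lexle.
Proof.
elim=> [|x u IH] [|y v] //=.
by case: (ltngtP x y) => //= _; rewrite ?orbT // IH.
Qed.

Lemma lexle_cons x u v : lexle (x :: u) (x :: v) = lexle u v.
Proof. by rewrite /= ltnn eqxx. Qed.

Definition all_trees (f : seq ptree) := forall t, t \in f -> is_tree t.

Section TreeFacts.
Variable t : ptree.
Hypothesis t_tree : is_tree t.

Lemma mem_tree_nil : [::] \in t.
Proof. by case: t_tree. Qed.

Lemma tree_word_pos u : u \in t -> all (fun i => 0 < i)%N u.
Proof. by case: t_tree => _ [H _]; apply: H. Qed.

Lemma tree_parent u i : rcons u i \in t -> u \in t.
Proof. by case: t_tree => _ [_ H] /H []. Qed.

Lemma tree_sibling u i j : rcons u i \in t -> (1 <= j <= i)%N -> rcons u j \in t.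
Proof. by case: t_tree => _ [_ H] /H [_]; apply. Qed.

Lemma tree_prefix u v : u ++ v \in t -> u \in t.
Proof.
elim/last_ind: v => [|v x IH]; first by rewrite cats0.
by rewrite -rcons_cat => /tree_parent.
Qed.

Lemma tree_take u l : u \in t -> take l u \in t.
Proof. by rewrite -{1}(cat_take_drop l u) => /tree_prefix. Qed.

End TreeFacts.

Definition child_words (t : ptree) (u : word) : {fset word} :=
  [fset v in t | (size v == (size u).+1) && (take (size u) v == u)]%fset.

Lemma child_wordsP t u v :
  (v \in child_words t u) = (v \in t) && (v == rcons u (last 0%N v)).
Proof.
rewrite /child_words !inE; congr (_ && _); apply/idP/eqP.
  case/andP=> /eqP sv /eqP tv; case/lastP: v sv tv => [|v x] //=.
  rewrite size_rcons => -[sv]; rewrite -cats1 take_size_cat // => ->.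
  by rewrite last_cat cats1.
by move=> ->; rewrite size_rcons eqxx -cats1 take_size_cat // eqxx.
Qed.

Lemma card_rcons_iota u n : #|` [fset x in map (rcons u) (iota 1 n)]%fset| = n.
Proof.
by rewrite card_fseq undup_id ?size_map ?size_iota //
  (map_inj_uniq (@rcons_injr _ u)) iota_uniq.
Qed.

Lemma mem_tree_rcons t u i : is_tree t ->
  (rcons u i \in t) = (0 < i <= nchildren t u)%N.
Proof.
move=> Ht; rewrite /nchildren -/(child_words t u); apply/idP/idP => [Hi|].
  have ip : (0 < i)%N by have := tree_word_pos Ht Hi; rewrite all_rcons => /andP[].
  rewrite ip -[X in (X <= _)%N](card_rcons_iota u i); apply: fsubset_leq_card.
  apply/fsubsetP => v; rewrite in_fset /= => /mapP [j]; rewrite mem_iota => Hj ->.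
  rewrite child_wordsP last_rcons eqxx andbT; apply: (tree_sibling Ht Hi).
  by move: Hj; rewrite add1n ltnS.
case/andP=> ip Hi; apply/negPn/negP => Hn.
suff : (#|` child_words t u| <= i.-1)%N by rewrite leqNgt -ltnS prednK // ltnS Hi.
rewrite -[X in (_ <= X)%N](card_rcons_iota u); apply: fsubset_leq_card.
apply/fsubsetP => v; rewrite child_wordsP => /andP[vt /eqP ev].
move: (last 0%N v) ev => x ev; rewrite ev in vt *.
rewrite in_fset /= mem_map ?mem_iota; last exact: rcons_injr.
have xp : (0 < x)%N by have := tree_word_pos Ht vt; rewrite all_rcons => /andP[].
rewrite xp add1n prednK // ltnNge; apply/negP => le; move/negP: Hn; apply.
by apply: (tree_sibling Ht vt); rewrite ip.
Qed.

Lemma nchildren_from_mem t u c : is_tree t ->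
  (forall i, (rcons u i \in t) = (0 < i <= c)%N) -> nchildren t u = c.
Proof.
move=> Ht E; case: (ltngtP (nchildren t u) c) => // lt.
  have := E c; rewrite mem_tree_rcons // leqnn (leq_ltn_trans _ lt) //.
  by rewrite andbT leqNgt lt andbF.
have := E (nchildren t u); rewrite mem_tree_rcons // leqnn (leq_ltn_trans _ lt) //.
by rewrite andbT leqNgt lt andbF.
Qed.

Lemma eq_nchildren t1 t2 u1 u2 : is_tree t1 -> is_tree t2 ->
  (forall i, (rcons u1 i \in t1) = (rcons u2 i \in t2)) ->
  nchildren t1 u1 = nchildren t2 u2.
Proof. by move=> H1 H2 E; apply: nchildren_from_mem => // i; rewrite E mem_tree_rcons. Qed.

Lemma nchildren_le_size t u : (nchildren t u <= tree_size t)%N.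
Proof.
apply: fsubset_leq_card; apply/fsubsetP => v.
by rewrite -/(child_words t u) child_wordsP => /andP[].
Qed.

Lemma tree_size_gt0 t : is_tree t -> (0 < tree_size t)%N.
Proof.
move=> Ht; rewrite /tree_size cardfs_gt0; apply/eqP => e.
by have := mem_tree_nil Ht; rewrite e inE.
Qed.

Lemma size_tree_word t u : is_tree t -> u \in t -> (size u < tree_size t)%N.
Proof.
move=> Ht Hu.
have -> : (size u).+1 = #|` [fset x in map (take^~ u) (iota 0 (size u).+1)]%fset|.
  rewrite card_fseq undup_id ?size_map ?size_iota //.
  rewrite map_inj_in_uniq ?iota_uniq // => l l'; rewrite !mem_iota /= !add0n !ltnS.
  by move=> le1 le2 e; rewrite -(size_takel le1) -(size_takel le2) e.
apply: fsubset_leq_card; apply/fsubsetP => v; rewrite in_fset.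
by move/mapP => [l _ ->]; apply: tree_take.
Qed.

Lemma tree_word_le_size t u : is_tree t -> u \in t ->
  all (fun x => x <= tree_size t)%N u.
Proof.
move=> Ht Hu; apply/allP => x xu; move: Hu; case/splitPr: xu => u1 u2.
rewrite -cat_rcons => /(tree_prefix Ht) H.
have : (0 < x <= nchildren t u1)%N by rewrite -mem_tree_rcons.
by case/andP=> _ /leq_trans; apply; apply: nchildren_le_size.
Qed.

Fixpoint bounded_words (s l : nat) : seq word :=
  if l is l'.+1 then [::] :: [seq x :: w | x <- iota 0 s.+1, w <- bounded_words s l']
  else [:: [::]].

Lemma mem_bounded_words s l u :
  (u \in bounded_words s l) = (size u <= l)%N && all (fun x => x <= s)%N u.
Proof.
elim: l u => [|l IH] [|x u] //.
change (bounded_words s l.+1)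
  with ([::] :: [seq y :: w | y <- iota 0 s.+1, w <- bounded_words s l]).
rewrite in_cons orFb; apply/allpairsPdep/idP.
  case=> y [w [yi wi [-> ->]]]; move: yi wi; rewrite mem_iota IH add0n ltnS /=.
  by move=> ys /andP[sw aw]; rewrite ltnS sw ys aw.
case/andP=> su /andP[xs us]; exists x, u; split => //.
  by rewrite mem_iota add0n ltnS xs.
by rewrite IH; apply/andP.
Qed.

Lemma finite_trees s : finite_set [set t : ptree | is_tree t /\ (tree_size t <= s)%N].
Proof.
apply: (@sub_finite_set _ _ [set` fpowerset [fset x in bounded_words s s]%fset]);
  last exact: finite_fset.
move=> t [Ht ts] /=; rewrite fpowersetE; apply/fsubsetP => u ut.
rewrite in_fset /= mem_bounded_words (leq_trans _ ts) ?(ltnW (size_tree_word Ht ut)) //=.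
by apply/allP => x /(allP (tree_word_le_size Ht ut)) /leq_trans; apply.
Qed.

Lemma finite_bounded_seqs (T : eqType) (X : set T) n : finite_set X ->
  finite_set [set f : seq T | (size f <= n)%N /\ forall x, x \in f -> X x].
Proof.
move=> FX; elim: n => [|n IH].
  apply: (@sub_finite_set _ _ [set [::]]); last exact: finite_set1.
  by move=> [|x f] //= [].
set S := [set f : seq T | (size f <= n)%N /\ forall x, x \in f -> X x] in IH *.
apply: (@sub_finite_set _ _ ([set [::]] `|` [set p.1 :: p.2 | p in X `*` S])).
  move=> [|x f] /= [sf Hf]; [by left | right].
  exists (x, f) => //; split => /=; first by apply: Hf; rewrite inE eqxx.
  by split => // y yf; apply: Hf; rewrite inE yf orbT.
by rewrite finite_setU; split; [exact: finite_set1 | exact/finite_image/finite_setX].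
Qed.

Lemma fsize_nil : fsize [::] = 0%N.
Proof. by rewrite /fsize big_nil. Qed.

Lemma fsize_cons t f : fsize (t :: f) = (tree_size t + fsize f)%N.
Proof. by rewrite /fsize big_cons. Qed.

Lemma fsize_cat f g : fsize (f ++ g) = (fsize f + fsize g)%N.
Proof. by rewrite /fsize big_cat. Qed.

Lemma all_trees_cat f g : all_trees (f ++ g) <-> all_trees f /\ all_trees g.
Proof.
split; first by move=> H; split => t tf; apply: H; rewrite mem_cat tf ?orbT.
by case=> Hf Hg t; rewrite mem_cat => /orP[/Hf|/Hg].
Qed.

Lemma all_trees_cons t f : all_trees (t :: f) <-> is_tree t /\ all_trees f.
Proof.
rewrite -cat1s all_trees_cat; split=> -[H1 H2]; split=> //; first exact/H1/mem_head.
by move=> u; rewrite inE => /eqP->.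
Qed.

Lemma size_le_fsize f : all_trees f -> (size f <= fsize f)%N.
Proof.
elim: f => [|t f IH] //= /all_trees_cons [Ht Hf].
by rewrite fsize_cons -add1n leq_add ?tree_size_gt0 ?IH.
Qed.

Lemma tree_size_le_fsize f t : t \in f -> (tree_size t <= fsize f)%N.
Proof.
elim: f => [|t' f IH] //; rewrite inE fsize_cons => /orP[/eqP ->|/IH].
  exact: leq_addr.
by move/leq_trans; apply; apply: leq_addl.
Qed.

Lemma finite_forests s : finite_set [set f : seq ptree | all_trees f /\ (fsize f <= s)%N].
Proof.
apply: sub_finite_set (finite_bounded_seqs s (finite_trees s)) => f [Hf fs].
split; first exact: leq_trans (size_le_fsize Hf) fs.
by move=> t tf; split; [exact: Hf | exact: leq_trans (tree_size_le_fsize tf) fs].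
Qed.

Definition graft_words (f : seq ptree) : seq word :=
  [::] :: [seq i.+1 :: v | i <- iota 0 (size f), v <- enum_fset (nth fset0 f i)].

Definition graft (f : seq ptree) : ptree := [fset x in graft_words f]%fset.

Lemma mem_graft_words_cons f x v : (x :: v \in graft_words f) =
  [&& (0 < x)%N, (x.-1 < size f)%N & (v \in nth fset0 f x.-1)].
Proof.
rewrite /graft_words in_cons orFb; apply/allpairsPdep/idP.
  case=> i [w [ii wi [-> ->]]] /=; move: ii; rewrite mem_iota add0n => /andP[_ hi].
  by rewrite hi wi.
case/and3P=> xp xs vi; exists x.-1, v.
by rewrite mem_iota add0n xs prednK.
Qed.

Lemma mem_graft_nil f : [::] \in graft f.
Proof. by rewrite in_fset in_cons eqxx. Qed.

Lemma mem_graft_cons f x v : (x :: v \in graft f) =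
  [&& (0 < x)%N, (x.-1 < size f)%N & (v \in nth fset0 f x.-1)].
Proof. by rewrite in_fset mem_graft_words_cons. Qed.

Lemma uniq_graft_words f : uniq (graft_words f).
Proof.
rewrite /graft_words cons_uniq; apply/andP; split.
  by apply/negP => /allpairsPdep [i [w [_ _]]].
apply: allpairs_uniq_dep; [exact: iota_uniq | by move=> i _; exact: fset_uniq |].
by move=> [i1 w1] [i2 w2] _ _ /= [-> ->].
Qed.

Lemma perm_graft f : perm_eq (enum_fset (graft f)) (graft_words f).
Proof.
apply: uniq_perm; [exact: fset_uniq | exact: uniq_graft_words |].
by move=> w; rewrite -[w \in enum_fset _]/(w \in graft f) in_fset.
Qed.

Lemma nth_all_trees f i : all_trees f -> (i < size f)%N -> is_tree (nth fset0 f i).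
Proof. by move=> Hf ifs; apply/Hf/mem_nth. Qed.

Lemma graft_tree f : all_trees f -> is_tree (graft f).
Proof.
move=> Hf; split; first exact: mem_graft_nil.
split=> [[|x v] //|[|x v] i].
  rewrite mem_graft_cons => /and3P[xp xs vi] /=.
  by rewrite xp; apply: (tree_word_pos (nth_all_trees Hf xs)).
  rewrite /= mem_graft_cons => /and3P[ip hi _]; split; first exact: mem_graft_nil.
  move=> j /andP[j1 ji]; rewrite mem_graft_cons j1 /=.
  have jl : (j.-1 < size f)%N by apply: leq_ltn_trans hi; rewrite -!subn1 leq_sub2r.
  by rewrite jl mem_tree_nil //; apply: nth_all_trees.
rewrite rcons_cons mem_graft_cons => /and3P[xp xs vi].
have Ht := nth_all_trees Hf xs.
split; first by rewrite mem_graft_cons xp xs (tree_parent Ht vi).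
by move=> j ji; rewrite rcons_cons mem_graft_cons xp xs (tree_sibling Ht vi ji).
Qed.

Lemma nchildren_graft_nil f : all_trees f -> nchildren (graft f) [::] = size f.
Proof.
move=> Hf; apply: nchildren_from_mem; first exact: graft_tree.
move=> [|i]; rewrite /= mem_graft_cons //=.
by case: ltnP => //= hi; rewrite mem_tree_nil //; apply: nth_all_trees.
Qed.

Lemma nchildren_graft_cons f x u : all_trees f -> (0 < x)%N -> (x.-1 < size f)%N ->
  nchildren (graft f) (x :: u) = nchildren (nth fset0 f x.-1) u.
Proof.
move=> Hf xp xs; apply: eq_nchildren; [exact: graft_tree | exact: nth_all_trees |].
by move=> i; rewrite rcons_cons mem_graft_cons xp xs.
Qed.

Definition subtree (t : ptree) (i : nat) : ptree :=
  [fset behead w | w in t & head 0%N w == i]%fset.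

Lemma mem_subtree t i v : (0 < i)%N -> (v \in subtree t i) = (i :: v \in t).
Proof.
move=> ip; apply/imfsetP/idP => /=.
  case=> -[|y w]; rewrite !inE => /andP[wt /eqP hw] ->; first by move: ip; rewrite -hw.
  by rewrite -hw.
by move=> H; exists (i :: v) => //; rewrite !inE H eqxx.
Qed.

Definition subtrees (t : ptree) : seq ptree :=
  [seq subtree t i.+1 | i <- iota 0 (nchildren t [::])].

Lemma size_subtrees t : size (subtrees t) = nchildren t [::].
Proof. by rewrite size_map size_iota. Qed.

Lemma nth_subtrees t i : (i < nchildren t [::])%N ->
  nth fset0 (subtrees t) i = subtree t i.+1.
Proof. by move=> H; rewrite (nth_map 0%N) ?size_iota // nth_iota. Qed.

Lemma graftK f : all_trees f -> subtrees (graft f) = f.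
Proof.
move=> Hf; apply: (@eq_from_nth _ fset0); first by rewrite size_subtrees nchildren_graft_nil.
move=> i; rewrite size_subtrees nchildren_graft_nil // => hi.
rewrite nth_subtrees ?nchildren_graft_nil //.
by apply/fsetP => v; rewrite mem_subtree // mem_graft_cons /= hi.
Qed.

Lemma subtrees_all_trees t : is_tree t -> all_trees (subtrees t).
Proof.
move=> Ht s /(nthP fset0) [i]; rewrite size_subtrees => hi <-.
rewrite nth_subtrees //; split.
  by rewrite mem_subtree // -[[:: i.+1]]/(rcons [::] i.+1) mem_tree_rcons.
split=> [u|u j]; rewrite !mem_subtree //; first exact: tree_word_pos.
rewrite -rcons_cons => H; split; first exact: (tree_parent Ht H).
by move=> k kj; rewrite mem_subtree // -rcons_cons (tree_sibling Ht H kj).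
Qed.

Lemma subtreesK t : is_tree t -> graft (subtrees t) = t.
Proof.
move=> Ht; apply/fsetP => [[|x v]]; first by rewrite mem_graft_nil mem_tree_nil.
rewrite mem_graft_cons size_subtrees; apply/idP/idP.
  by case/and3P=> xp xs; rewrite nth_subtrees // prednK // mem_subtree.
move=> H; have xp : (0 < x)%N by have := tree_word_pos Ht H; case/andP.
have xs : (x.-1 < nchildren t [::])%N.
  rewrite prednK //; have := tree_take Ht 1 H; rewrite /= take0.
  by rewrite -[[:: x]]/(rcons [::] x) mem_tree_rcons // => /andP[].
by rewrite xp xs nth_subtrees // prednK // mem_subtree.
Qed.

Lemma lineage_graft f x u k j : all_trees f -> (0 < x)%N -> (x.-1 < size f)%N ->
  lineage (graft f) (x :: u) k j =
  (lineage (nth fset0 f x.-1) u k j + ((size f == k) && (x == j)))%N.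
Proof.
move=> Hf xp xs; rewrite /lineage /= -[1%N]addn0 iotaDl count_map addnC.
congr (_ + _)%N; last by rewrite take0 nchildren_graft_nil //= eqseq_cons andbT.
apply: eq_count => l /=; rewrite /preim add1n /= nchildren_graft_cons //.
by rewrite -rcons_cons eqseq_cons eqxx.
Qed.

Definition vertices (t : ptree) : seq word := sort lexle (enum_fset t).

Lemma size_vertices t : size (vertices t) = tree_size t.
Proof. by rewrite size_sort. Qed.

Definition forest_vertices (f : seq ptree) : seq word :=
  flatten [seq [seq i.+1 :: v | v <- vertices (nth fset0 f i)] | i <- iota 0 (size f)].

Lemma pairwise_lexle_blocks f m n : pairwise lexle
  (flatten [seq [seq i.+1 :: v | v <- vertices (nth fset0 f i)] | i <- iota m n]).
Proof.
elim: n m => [|n IH] m //=.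
rewrite pairwise_cat IH andbT; apply/andP; split.
  apply/allrelP => x y /mapP [v _ ->] /flatten_mapP [i].
  rewrite mem_iota => /andP[mi _] /mapP [w _ ->] /=.
  by rewrite ltnS mi.
rewrite pairwise_map -sorted_pairwise => [|a b c]; last exact: lexle_trans.
apply: sub_sorted (sort_sorted lexle_total _) => a b ab.
by have : lexle (m.+1 :: a) (m.+1 :: b) by rewrite lexle_cons.
Qed.

Lemma vertices_graft f : vertices (graft f) = [::] :: forest_vertices f.
Proof.
apply: (sorted_eq lexle_trans lexle_anti); first exact: sort_sorted lexle_total _.
  by rewrite sorted_pairwise /= ?pairwise_lexle_blocks ?andbT; [apply/allP | exact: lexle_trans].
rewrite /vertices perm_sort (permPl (perm_graft f)).
apply: uniq_perm; first exact: uniq_graft_words.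
  rewrite cons_uniq; apply/andP; split.
    by apply/negP => /flatten_mapP [i _ /mapP [v]].
  apply: allpairs_uniq_dep; first exact: iota_uniq.
    by move=> i _; rewrite sort_uniq; exact: fset_uniq.
  by move=> [i1 w1] [i2 w2] _ _ /= [-> ->].
move=> [|x v]; first by rewrite !in_cons eqxx.
rewrite mem_graft_words_cons in_cons orFb; apply/idP/flatten_mapP.
  case/and3P=> xp xs vi; exists x.-1; first by rewrite mem_iota add0n xs.
  by apply/mapP; exists v; rewrite ?prednK // mem_sort.
case=> i; rewrite mem_iota add0n => /andP[_ hi] /mapP [w].
by rewrite mem_sort => wi [-> ->] /=; rewrite hi.
Qed.

Lemma size_forest_vertices f : size (forest_vertices f) = fsize f.
Proof.
rewrite size_flatten sumnE /shape -map_comp big_map /fsize (big_nth fset0).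
rewrite /index_iota subn0; apply: eq_bigr => i _ /=.
by rewrite size_map size_vertices.
Qed.

Lemma size_graft f : tree_size (graft f) = (fsize f).+1.
Proof. by rewrite -size_vertices vertices_graft /= size_forest_vertices. Qed.

Lemma vertex_tree0 t : is_tree t -> vertex t 0 = [::].
Proof. by move=> Ht; rewrite -(subtreesK Ht) /vertex -/(vertices _) vertices_graft. Qed.

Lemma vertex_graftS f m : vertex (graft f) m.+1 = nth [::] (forest_vertices f) m.
Proof. by rewrite /vertex -/(vertices _) vertices_graft. Qed.

Lemma nth_forest_vertices_cat f1 t f2 m :
  (fsize f1 <= m < fsize f1 + tree_size t)%N ->
  nth [::] (forest_vertices (f1 ++ t :: f2)) m = (size f1).+1 :: vertex t (m - fsize f1).
Proof.
case/andP=> le lt.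
rewrite /forest_vertices size_cat /= iotaD map_cat flatten_cat add0n.
have -> : [seq [seq i.+1 :: v | v <- vertices (nth fset0 (f1 ++ t :: f2) i)]
            | i <- iota 0 (size f1)] =
          [seq [seq i.+1 :: v | v <- vertices (nth fset0 f1 i)] | i <- iota 0 (size f1)].
  by apply/eq_in_map => i; rewrite mem_iota add0n => /andP[_ hi]; rewrite nth_cat hi.
rewrite nth_cat -/(forest_vertices f1) size_forest_vertices ltnNge le /=.
rewrite nth_cat size_map size_vertices nth_cat ltnn subnn /=.
by rewrite ltn_subLR // lt (nth_map [::]) ?size_vertices ?ltn_subLR.
Qed.

Lemma fsbig_pair_dep (R : nmodType) (I J : choiceType) (A : set I) (B : I -> set J)
    (U : set J) (F : I -> J -> R) :
  finite_set A -> finite_set U -> (forall i, A i -> B i `<=` U) ->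
  \sum_(i \in A) \sum_(j \in B i) F i j =
  \sum_(p \in [set p | A p.1 /\ B p.1 p.2]) F p.1 p.2.
Proof.
move=> FA FU BU; pose G i j := if `[< B i j >] then F i j else 0.
transitivity (\sum_(i \in A) \sum_(j \in U) G i j).
  apply: eq_fsbigr => i; rewrite inE => Ai.
  transitivity (\sum_(j \in B i) G i j).
    by apply: eq_fsbigr => j; rewrite inE /G => Bj; rewrite asboolT.
  apply: fsbig_widen; first exact: BU.
  by move=> j [_ nB]; rewrite /preimage /= /G asboolF.
rewrite pair_fsbig //.
transitivity (\sum_(p \in [set p | A p.1 /\ B p.1 p.2]) G p.1 p.2); last first.
  by apply: eq_fsbigr => p; rewrite inE => -[_ Bp]; rewrite /G asboolT.
apply/esym/fsbig_widen => [p [Ap Bp]|[i j] [[Ai Uj] /= nS]]; first by split=> //; apply: BU Ap _ Bp.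
by rewrite /preimage /= /G asboolF // => Bj; apply: nS.
Qed.

Lemma fsbig_partition (R : nmodType) (I : choiceType) (J : eqType) (A : set I)
    (g : I -> J) (r : seq J) (F : I -> R) :
  finite_set A -> uniq r -> (forall i, A i -> g i \notin r -> F i = 0) ->
  \sum_(i \in A) F i = \sum_(y <- r) \sum_(i \in [set i | A i /\ g i = y]) F i.
Proof.
elim: r A => [|y r IH] A FA ur H0.
  by rewrite big_nil; apply: fsbig1 => i Ai; apply: H0.
case/andP: ur => yr ur.
rewrite big_cons (fsbigID [set i | g i = y]) //; congr (_ + _).
rewrite (IH _ (finite_setIl _ FA) ur); last first.
  by move=> i [Ai /eqP ngi] gr; apply: H0; rewrite // in_cons negb_or ngi.
apply: eq_big_seq => z zr; apply: eq_fsbigl; apply/seteqP.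
split=> [i [[Ai _] gi] //|i [Ai gi]]; split=> //; split=> // e.
by move: yr; rewrite -e gi zr.
Qed.

Definition splice (p : (seq ptree * seq ptree) * ptree) : seq ptree :=
  p.1.1 ++ p.2 :: p.1.2.

Definition splice_at (x : nat) (p : (seq ptree * seq ptree) * ptree) : Prop :=
  [/\ all_trees p.1.1, all_trees p.1.2, is_tree p.2 &
      (fsize p.1.1 <= x < fsize p.1.1 + tree_size p.2)%N].

Lemma splice_exists f x : (x < fsize f)%N ->
  exists f1 t f2, f = f1 ++ t :: f2 /\ (fsize f1 <= x < fsize f1 + tree_size t)%N.
Proof.
elim: f x => [|t f IH] x; rewrite ?fsize_nil ?fsize_cons // => xlt.
case: (ltnP x (tree_size t)) => xt; first by exists [::], t, f; rewrite fsize_nil.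
have /IH [f1 [u [f2 [-> H]]]] : (x - tree_size t < fsize f)%N by lia.
by exists (t :: f1), u, f2; split => //; rewrite fsize_cons; lia.
Qed.

Lemma splice_inj f1 t f2 g1 u g2 x :
  (fsize f1 <= x < fsize f1 + tree_size t)%N ->
  (fsize g1 <= x < fsize g1 + tree_size u)%N ->
  f1 ++ t :: f2 = g1 ++ u :: g2 -> [/\ f1 = g1, t = u & f2 = g2].
Proof.
elim: f1 g1 x => [|t1 f1 IH] [|u1 g1] x /=; rewrite ?fsize_cons ?fsize_nil.
- by move=> _ _ [-> ->].
- by move=> H1 H2 [e _]; move: H1 H2; rewrite e; lia.
- by move=> H1 H2 [e _]; move: H1 H2; rewrite e; lia.
move=> H1 H2 [e E]; subst u1.
by have [-> -> ->] := IH g1 (x - tree_size t1)%N ltac:(lia) ltac:(lia) E.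
Qed.

Lemma fsbig_splice (R : nmodType) (F : seq ptree -> R) (Q : seq ptree -> Prop) x :
  (forall f, all_trees f -> Q f -> (x < fsize f)%N) ->
  \sum_(f \in [set f | all_trees f /\ Q f]) F f =
  \sum_(p \in [set p | splice_at x p /\ Q (splice p)]) F (splice p).
Proof.
move=> HQ; apply: reindex_fsbig; split.
- move=> [[f1 f2] t] [[H1 H2 Ht _] Qp]; split => //.
  by apply/all_trees_cat; split => //; apply/all_trees_cons.
- move=> [[f1 f2] t] [[g1 g2] u]; rewrite !inE => -[[_ _ _ /= B1] _] [[_ _ _ /= B2] _].
  by rewrite /splice /= => /(splice_inj B1 B2) [-> -> ->].
move=> f [Hf Qf]; have [f1 [t [f2 [ef B]]]] := splice_exists (HQ f Hf Qf).
exists ((f1, f2), t); last by rewrite /splice /= ef.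
move: Hf; rewrite ef => /all_trees_cat [H1 /all_trees_cons [Ht H2]].
by split; [split | rewrite /splice /= -ef].
Qed.

Section Weights.
Variables (R : realType) (mu : nat -> R).

Lemma forest_weight_nil : forest_weight mu [::] = 1.
Proof. by rewrite /forest_weight big_nil. Qed.

Lemma forest_weight_cons t f : forest_weight mu (t :: f) = GWprob mu t * forest_weight mu f.
Proof. by rewrite /forest_weight big_cons. Qed.

Lemma forest_weight_cat f g :
  forest_weight mu (f ++ g) = forest_weight mu f * forest_weight mu g.
Proof. by rewrite /forest_weight big_cat. Qed.

Lemma GWprob_graft f : all_trees f ->
  GWprob mu (graft f) = mu (size f) * forest_weight mu f.
Proof.
move=> Hf; rewrite /GWprob (perm_big _ (perm_graft f)) big_cons nchildren_graft_nil //.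
congr (_ * _); rewrite big_allpairs_dep /forest_weight (big_nth fset0) /index_iota subn0.
apply: eq_big_seq => i; rewrite mem_iota add0n => /andP[_ hi].
by apply: eq_bigr => v _; rewrite nchildren_graft_cons.
Qed.

Lemma PrT_graft (P : ptree -> Prop) : PrT mu P =
  \sum_(f \in [set f | all_trees f /\ P (graft f)]) mu (size f) * forest_weight mu f.
Proof.
rewrite /PrT (reindex_fsbig graft [set f | all_trees f /\ P (graft f)]).
  by apply: eq_fsbigr => f; rewrite inE => -[Hf _]; exact: GWprob_graft.
split.
- by move=> f [Hf Pf]; split => //; exact: graft_tree.
- move=> f g; rewrite !inE => -[Hf _] [Hg _] e.
  by rewrite -(graftK Hf) -(graftK Hg) e.
move=> t [Ht Pt]; exists (subtrees t); last exact: subtreesK.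
by split; [exact: subtrees_all_trees | rewrite subtreesK].
Qed.

End Weights.

Definition index_pairs (K : nat) : seq (nat * nat) :=
  [seq (k, j) | k <- iota 1 K, j <- iota 1 k].

Lemma uniq_index_pairs K : uniq (index_pairs K).
Proof.
apply: allpairs_uniq_dep; [exact: iota_uniq | by move=> k _; exact: iota_uniq |].
by move=> [k1 j1] [k2 j2] _ _ /= [-> ->].
Qed.

Lemma mem_index_pairs K k j :
  ((k, j) \in index_pairs K) = (1 <= j <= k)%N && (k <= K)%N.
Proof.
apply/allpairsPdep/idP => [[k' [j' [+ + [-> ->]]]]|].
  by rewrite !mem_iota; lia.
case/andP=> /andP[j1 jk] kK; exists k, j; rewrite !mem_iota; split => //; lia.
Qed.

Lemma big_index_pairs (T : Type) (idx : T) (op : Monoid.com_law idx) K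
    (G : nat -> nat -> T) :
  \big[op/idx]_(1 <= k < K.+1) \big[op/idx]_(1 <= j < k.+1) G k j =
  \big[op/idx]_(p <- index_pairs K) G p.1 p.2.
Proof.
rewrite /index_pairs big_allpairs_dep /index_iota subn1 /=.
by apply: eq_bigr => k _; rewrite subn1.
Qed.

Definition decr (a : nat -> nat -> nat) (k0 j0 : nat) : nat -> nat -> nat :=
  fun k j => if (k == k0) && (j == j0) then (a k j).-1 else a k j.

Lemma big_index_pairs_decr (T : Type) (idx : T) (op : Monoid.com_law idx) K a k0 j0
    (F : nat -> nat -> nat -> T) : (k0, j0) \in index_pairs K ->
  \big[op/idx]_(p <- index_pairs K) F p.1 p.2 (decr a k0 j0 p.1 p.2) =
  op (F k0 j0 (a k0 j0).-1)
     (\big[op/idx]_(p <- index_pairs K | p != (k0, j0)) F p.1 p.2 (a p.1 p.2)).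
Proof.
move=> p0; rewrite (bigD1_seq (k0, j0)) ?uniq_index_pairs //= /decr !eqxx.
congr (op _ _); apply: eq_bigr => -[k j] /=.
by case: ifP => // /andP[/eqP -> /eqP ->]; rewrite eqxx.
Qed.

Section IndexSums.
Variables (K : nat) (a : nat -> nat -> nat) (k0 j0 : nat).
Hypotheses (p0 : (k0, j0) \in index_pairs K) (a_gt0 : (0 < a k0 j0)%N).

Lemma sumI_decr (G : nat -> nat -> nat) :
  sumI K (fun k j => G k j * a k j)%N =
  (sumI K (fun k j => G k j * decr a k0 j0 k j) + G k0 j0)%N.
Proof.
rewrite /sumI !big_index_pairs (bigD1_seq (k0, j0)) ?uniq_index_pairs //=.
by rewrite (big_index_pairs_decr _ a (fun k j n => G k j * n)%N) // addnAC -mulnSr prednK.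
Qed.

Lemma sumI_mul1 b : sumI K (fun k j => 1 * b k j)%N = sumI K b.
Proof. by apply: eq_bigr => k _; apply: eq_bigr => j _; rewrite mul1n. Qed.

Lemma sumI_decr1 : sumI K a = (sumI K (decr a k0 j0)).+1.
Proof. by rewrite -sumI_mul1 sumI_decr sumI_mul1 addn1. Qed.

Lemma N1_decr : N1 K a = (j0.-1 + N1 K (decr a k0 j0))%N.
Proof. by rewrite /N1 sumI_decr addnC subn1. Qed.

Lemma N2_decr : N2 K a = (N2 K (decr a k0 j0) + (k0 - j0))%N.
Proof. by rewrite /N2 sumI_decr. Qed.

End IndexSums.

Lemma sumI_eq0 K a : sumI K a = 0%N -> forall k j, (k, j) \in index_pairs K -> a k j = 0%N.
Proof.
rewrite /sumI big_index_pairs => /eqP; rewrite sum_nat_seq_eq0 => /allP H k j kj.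
exact/eqP/(H (k, j)).
Qed.

Lemma sumI_lin_eq0 K (G : nat -> nat -> nat) a :
  (forall k j, (k, j) \in index_pairs K -> a k j = 0%N) ->
  sumI K (fun k j => G k j * a k j)%N = 0%N.
Proof.
move=> H; rewrite /sumI big_index_pairs big1_seq // => -[k j] /andP[_ kj].
by rewrite H ?muln0.
Qed.

Section Multinomial.
Variables (R : realType) (mu : nat -> R) (K : nat).

Lemma Qh_index_pairs h a : Qh mu K h a =
  h`!%:R / (\prod_(p <- index_pairs K) ((a p.1 p.2)`!)%:R)
  * \prod_(p <- index_pairs K) mu p.1 ^+ a p.1 p.2.
Proof. by rewrite /Qh !big_index_pairs. Qed.

Lemma Qh0 a : (forall k j, (k, j) \in index_pairs K -> a k j = 0%N) -> Qh mu K 0 a = 1.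
Proof.
move=> H; rewrite Qh_index_pairs !big1_seq ?divr1 ?mulr1 // => -[k j] /andP[_ kj].
  by rewrite H ?expr0.
by rewrite H.
Qed.

Lemma Qh_succ h a : sumI K a = h.+1 ->
  \sum_(p <- index_pairs K)
     (if (0 < a p.1 p.2)%N then mu p.1 * Qh mu K h (decr a p.1 p.2) else 0)
  = Qh mu K h.+1 a.
Proof.
move=> sa; pose C := h`!%:R / (\prod_(p <- index_pairs K) ((a p.1 p.2)`!)%:R)
                     * \prod_(p <- index_pairs K) mu p.1 ^+ a p.1 p.2 : R.
transitivity (\sum_(p <- index_pairs K) (a p.1 p.2)%:R * C); last first.
  rewrite -mulr_suml -natr_sum -big_index_pairs -/(sumI K a) sa Qh_index_pairs /C.
  by rewrite factS natrM !mulrA.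
apply: eq_big_seq => -[k j] pK /=.
case: ifP => [ap|/negbT]; last by rewrite -eqn0Ngt => /eqP ->; rewrite mul0r.
rewrite Qh_index_pairs /C (big_index_pairs_decr _ a (fun _ _ n => n`!%:R)) //.
rewrite (big_index_pairs_decr _ a (fun k _ n => mu k ^+ n)) //=.
rewrite !(bigD1_seq (k, j)) ?uniq_index_pairs //=.
set P := \prod_(_ <- _ | _) _`!%:R; set M := \prod_(_ <- _ | _) _.
have P0 : P != 0.
  rewrite prodf_seq_neq0; apply/allP => p _; apply/implyP => _.
  by rewrite pnatr_eq0 -lt0n fact_gt0.
rewrite -(prednK ap) factS exprS natrM /=; set n := (a k j).-1.
have F0 : n`!%:R != 0 :> R by rewrite pnatr_eq0 -lt0n fact_gt0.
have n0 : 1 + n%:R != 0 :> R by rewrite addrC natr1 pnatr_eq0.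
by field; rewrite P0 F0 n0.
Qed.

End Multinomial.

Definition lineage_is (K : nat) (t : ptree) (u : word) (a : nat -> nat -> nat) : Prop :=
  forall k j, (1 <= j <= k)%N -> (k <= K)%N -> lineage t u k j = a k j.

Lemma lineage_is_graft K f i v a : all_trees f -> (i < size f <= K)%N ->
  lineage_is K (graft f) (i.+1 :: v) a <->
  (0 < a (size f) i.+1)%N /\ lineage_is K (nth fset0 f i) v (decr a (size f) i.+1).
Proof.
move=> Hf /andP[ifs fK].
have E k j : lineage (graft f) (i.+1 :: v) k j =
    (lineage (nth fset0 f i) v k j + ((k == size f) && (j == i.+1)))%N.
  by rewrite lineage_graft // eq_sym [i.+1 == _]eq_sym.
have ikK : (1 <= i.+1 <= size f)%N && (size f <= K)%N by rewrite ifs fK.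
split=> [L|[ap L] k j kj kK].
  split=> [|k j kj kK]; first by rewrite -L // E !eqxx addn1.
  rewrite /decr -(L k j) // E.
  by case: ifP => [/andP[/eqP-> /eqP->]|->]; rewrite ?eqxx /= ?addn1 ?addn0.
rewrite E L //= /decr.
by case: ifP => [/andP[/eqP-> /eqP->]|_]; rewrite /= ?addn1 ?addn0 ?prednK.
Qed.

Definition side_forests (k1 k2 x y : nat) : set (seq ptree * seq ptree) :=
  [set q | [/\ is_forest k1 q.1, is_forest k2 q.2, (fsize q.1 <= x)%N & (fsize q.2 < y)%N]].

Lemma finite_side_forests k1 k2 x y : finite_set (side_forests k1 k2 x y).
Proof.
apply: (@sub_finite_set _ _ ([set f | all_trees f /\ (fsize f <= x + y)%N] `*`
                             [set f | all_trees f /\ (fsize f <= x + y)%N])).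
  by move=> [f1 f2] [[_ H1] [_ H2] /= b1 b2]; split; split => //=; lia.
exact/finite_setX/finite_forests/finite_forests.
Qed.

Section RootDecomposition.
Variables (R : realType) (mu : nat -> R) (K : nat).
Hypothesis mu_supp : forall k, (K < k)%N -> mu k = 0.

(* [y] is the number of vertices after [u(x)]. *)
Definition vertex_lineage_prob (x y : nat) (a : nat -> nat -> nat) : R :=
  PrT mu (fun t => tree_size t = (x + y)%N /\ lineage_is K t (vertex t x) a).

Definition splice_event x y a (p : (seq ptree * seq ptree) * ptree) : Prop :=
  fsize (splice p) = (x + y)%N /\
  lineage_is K (graft (splice p)) (nth [::] (forest_vertices (splice p)) x) a.

Lemma vertex_lineage_prob_splice x y a : (0 < y)%N ->
  vertex_lineage_prob x.+1 y a =
  \sum_(p \in [set p | splice_at x p /\ splice_event x y a p])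
     mu (size (splice p)) * forest_weight mu (splice p).
Proof.
move=> y_gt0; rewrite /vertex_lineage_prob PrT_graft.
pose Q f := fsize f = (x + y)%N /\ lineage_is K (graft f) (nth [::] (forest_vertices f) x) a.
transitivity (\sum_(f \in [set f | all_trees f /\ Q f]) mu (size f) * forest_weight mu f).
  apply: eq_fsbigl; apply/seteqP; split=> f [Hf [Hs HL]]; split=> //.
    by split; [apply/eqP; rewrite -eqSS -size_graft Hs | rewrite -vertex_graftS].
  by rewrite size_graft Hs vertex_graftS.
by apply: fsbig_splice => f _ [-> _]; rewrite -addn1 leq_add2l.
Qed.

Lemma finite_splice_event x y a :
  finite_set [set p | splice_at x p /\ splice_event x y a p].
Proof.
pose F := [set f | all_trees f /\ (fsize f <= x + y)%N].
apply: (@sub_finite_set _ _ ((F `*` F) `*` [set t | is_tree t /\ (tree_size t <= x + y)%N])).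
  move=> [[f1 f2] t] [[H1 H2 Ht B] [e _]]; move: e; rewrite /splice /= fsize_cat fsize_cons.
  by move=> e; split; [split|] => /=; split => //; lia.
exact/finite_setX/finite_trees/finite_setX/finite_forests/finite_forests.
Qed.

Lemma splice_event_index x y a k j (p : (seq ptree * seq ptree) * ptree) :
  (k, j) \in index_pairs K -> splice_at x p ->
  (size (splice p), (size p.1.1).+1) = (k, j) ->
  splice_event x y a p <->
  [/\ (0 < a k j)%N, fsize (splice p) = (x + y)%N &
      lineage_is K p.2 (vertex p.2 (x - fsize p.1.1)) (decr a k j)].
Proof.
case: p => -[f1 f2] t; rewrite mem_index_pairs /splice /= => /andP[_ kK].
case=> H1 H2 Ht B [ek ej]; rewrite /splice_event /= nth_forest_vertices_cat //.
have Hf : all_trees (f1 ++ t :: f2) by apply/all_trees_cat; split => //; exact/all_trees_cons.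
rewrite lineage_is_graft //; last by move: kK ek; rewrite /splice /= size_cat /=; lia.
rewrite /splice /= ek ej nth_cat ltnn subnn /=.
by split=> [[? []]|[]].
Qed.

Lemma splice_event_set x y a k j : (k, j) \in index_pairs K -> (0 < a k j)%N ->
  [set p | (splice_at x p /\ splice_event x y a p) /\
           (size (splice p), (size p.1.1).+1) = (k, j)] =
  [set p | side_forests j.-1 (k - j) x y p.1 /\
           (is_tree p.2 /\ (tree_size p.2 = (x - fsize p.1.1) + (y - fsize p.1.2) /\
              lineage_is K p.2 (vertex p.2 (x - fsize p.1.1)) (decr a k j)))%N].
Proof.
move=> pK ap; have := pK; rewrite mem_index_pairs => /andP[/andP[j1 jk] _].
apply/seteqP; split=> -[[f1 f2] t] /=.
  move=> [[Hs /(splice_event_index _ _ pK Hs) E] I]; have [_ Fs L] := E I.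
  case: Hs I Fs L => /= H1 H2 Ht B [ek ej].
  rewrite /splice fsize_cat fsize_cons /= => Fs L.
  move: ek; rewrite size_cat /= => ek.
  by split; [split; [split | split | |] | split; [| split]] => //=; lia.
move=> [[[s1 H1] [s2 H2] /= b1 b2] [Ht [ts L]]].
have I : (size (splice ((f1, f2), t)), (size f1).+1) = (k, j).
  by rewrite /splice size_cat /= s1 s2; congr pair; lia.
have Hs : splice_at x ((f1, f2), t) by split => //=; lia.
split=> //; split=> //; apply/(splice_event_index _ _ pK Hs I); split=> //.
by rewrite /splice /= fsize_cat fsize_cons; lia.
Qed.

Lemma vertex_lineage_prob_succ x y a : (0 < y)%N ->
  vertex_lineage_prob x.+1 y a =
  \sum_(p <- index_pairs K) (if (0 < a p.1 p.2)%N then mu p.1 *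
     \sum_(q \in side_forests p.2.-1 (p.1 - p.2) x y)
        (forest_weight mu q.1 * forest_weight mu q.2 *
         vertex_lineage_prob (x - fsize q.1) (y - fsize q.2) (decr a p.1 p.2))
   else 0).
Proof.
move=> y_gt0; rewrite vertex_lineage_prob_splice //.
rewrite (@fsbig_partition _ _ _ _ (fun p => (size (splice p), (size p.1.1).+1))
           _ _ (finite_splice_event x y a) (uniq_index_pairs K)); last first.
  move=> [[f1 f2] t] _; rewrite mem_index_pairs /splice size_cat /=.
  rewrite -[X in (X < _)%N]addn0 ltn_add2l /=.
  by rewrite -ltnNge => /mu_supp ->; rewrite mul0r.
apply: eq_big_seq => -[k j] pK /=; case: ifP => ap; last first.
  apply: fsbig1 => p [[Hp Ep] Ip].
  by have [] := (splice_event_index _ _ pK Hp Ip).1 Ep; rewrite ap.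
have kE : (j.-1 + (k - j).+1)%N = k by move: pK; rewrite mem_index_pairs; lia.
pose B q := [set t | is_tree t /\ (tree_size t = (x - fsize q.1 + (y - fsize q.2))%N /\
               lineage_is K t (vertex t (x - fsize q.1)) (decr a k j))].
transitivity (\sum_(q \in side_forests j.-1 (k - j) x y) \sum_(t \in B q)
                mu k * (forest_weight mu q.1 * forest_weight mu q.2) * GWprob mu t).
  rewrite (fsbig_pair_dep (U := [set t | is_tree t /\ (tree_size t <= x + y)%N]));
    first last.
  - by move=> q [_ _ _ b] t [Ht [ts _]]; split=> //; rewrite ts; lia.
  - exact: finite_trees.
  - exact: finite_side_forests.
  rewrite splice_event_set //.
  apply: eq_fsbigr => -[[f1 f2] t]; rewrite inE => -[[[/= s1 _] [/= s2 _] _ _] _].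
  rewrite /splice size_cat /= s1 s2 kE forest_weight_cat forest_weight_cons; ring.
rewrite mulr_fsumr; apply: eq_fsbigr => q _.
by rewrite /vertex_lineage_prob /PrT !mulr_fsumr; apply: eq_fsbigr => t _; rewrite !mulrA.
Qed.

End RootDecomposition.

Lemma is_forest_cat k1 k2 f g :
  is_forest k1 f -> is_forest k2 g -> is_forest (k1 + k2) (f ++ g).
Proof. by case=> s1 H1 [s2 H2]; split; [rewrite size_cat s1 s2 | exact/all_trees_cat]. Qed.

Lemma is_forest_take k1 k2 f : is_forest (k1 + k2) f -> is_forest k1 (take k1 f).
Proof. by case=> sf Hf; split=> [|t /mem_take /Hf //]; rewrite size_takel // sf leq_addr. Qed.

Lemma is_forest_drop k1 k2 f : is_forest (k1 + k2) f -> is_forest k2 (drop k1 f).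
Proof. by case=> sf Hf; split=> [|t /mem_drop /Hf //]; rewrite size_drop sf addKn. Qed.

Lemma fsize_take_drop n f : fsize f = (fsize (take n f) + fsize (drop n f))%N.
Proof. by rewrite -fsize_cat cat_take_drop. Qed.

Definition forest_pairs (k k' : nat) (x y : int) : set (seq ptree * seq ptree) :=
  [set p | [/\ is_forest k p.1, is_forest k' p.2, (fsize p.1)%:Z = x & (fsize p.2)%:Z = y]].

(* Concatenation [(q1, q2), (p1, p2)] |-> [(q1 ++ p1, p2 ++ q2)] is inverted by
   cutting after [k1] trees on the left and after [n2] trees on the right. *)
Lemma forest_cat_bij k1 k2 n1 n2 x y d : (0 < n2)%N ->
  set_bij [set r | side_forests k1 k2 x y r.1 /\
                   forest_pairs n1 n2 ((x - fsize r.1.1)%N%:Z - d%:Z) (y - fsize r.1.2)%N r.2]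
          (forest_pairs (k1 + n1) (n2 + k2) (x%:Z - d%:Z) y)
          (fun r => (r.1.1 ++ r.2.1, r.2.2 ++ r.1.2)).
Proof.
move=> n2_gt0; split.
- move=> [[f1 f2] [g1 g2]] [[F1 F2 /= b1 b2] [G1 G2 /= e1 e2]] /=.
  split; rewrite /= ?fsize_cat; try exact: is_forest_cat; lia.
- move=> [[f1 f2] [g1 g2]] [[h1 h2] [l1 l2]]; rewrite !inE /=.
  move=> [[[s1 _] [s2 _] _ _] [[s3 _] [s4 _] _ _]] [[[t1 _] [t2 _] _ _] [[t3 _] [t4 _] _ _]].
  move: s1 s2 s3 s4 t1 t2 t3 t4 => /= s1 s2 s3 s4 t1 t2 t3 t4 [e1 e2].
  have -> : f1 = h1 by move: (congr1 (take k1) e1); rewrite !take_size_cat.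
  have -> : g1 = l1 by move: (congr1 (drop k1) e1); rewrite !drop_size_cat.
  have -> : g2 = l2 by move: (congr1 (take n2) e2); rewrite !take_size_cat.
  by have -> : f2 = h2 by move: (congr1 (drop n2) e2); rewrite !drop_size_cat.
move=> [F F'] [/= HF HF' eF eF'].
have st : size (take n2 F') = n2 by case: HF' => sF' _; rewrite size_takel // sF' leq_addr.
have lt := size_le_fsize (proj2 (is_forest_take HF')); rewrite st in lt.
have e1 := fsize_take_drop k1 F; have e2 := fsize_take_drop n2 F'.
exists ((take k1 F, drop n2 F'), (drop k1 F, take n2 F')); last by rewrite /= !cat_take_drop.
split; split=> /=; [exact: is_forest_take HF | exact: is_forest_drop HF' | lia | lia |
                    exact: is_forest_drop HF | exact: is_forest_take HF' | lia | lia].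
Qed.

Section Convolution.
Variables (R : realType) (mu : nat -> R).

Lemma PrFF_convolution k1 k2 n1 n2 x y d : (0 < n2)%N ->
  \sum_(q \in side_forests k1 k2 x y) forest_weight mu q.1 * forest_weight mu q.2 *
     PrFF mu n1 n2 ((x - fsize q.1)%N%:Z - d%:Z) (y - fsize q.2)%N
  = PrFF mu (k1 + n1) (n2 + k2) (x%:Z - d%:Z) y.
Proof.
move=> n2_gt0; pose F := [set f | all_trees f /\ (fsize f <= x + y)%N].
transitivity (\sum_(q \in side_forests k1 k2 x y)
  \sum_(p \in forest_pairs n1 n2 ((x - fsize q.1)%N%:Z - d%:Z) (y - fsize q.2)%N)
    forest_weight mu q.1 * forest_weight mu q.2 *
    (forest_weight mu p.1 * forest_weight mu p.2)).
  by apply: eq_fsbigr => q _; rewrite /PrFF mulr_fsumr.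
rewrite (fsbig_pair_dep (U := F `*` F)); first last.
- move=> q [_ _ b1 b2] p [[_ H1] [_ H2] e1 e2].
  by split; split=> //; lia.
- exact/finite_setX/finite_forests/finite_forests.
- exact: finite_side_forests.
rewrite /PrFF -/(forest_pairs _ _ _ _) (reindex_fsbig _ _ _ _ (@forest_cat_bij k1 k2 n1 n2 x y d n2_gt0)).
by apply: eq_fsbigr => -[[f1 f2] [g1 g2]] _ /=; rewrite !forest_weight_cat; ring.
Qed.

End Convolution.

Section LineageFormula.
Variables (R : realType) (mu : nat -> R) (K : nat).
Hypothesis mu_supp : forall k, (K < k)%N -> mu k = 0.

Lemma PrFF_lt0 k k' x y : x < 0 -> PrFF mu k k' x y = 0.
Proof. by move=> x_lt0; apply: fsbig1 => p [_ _ e _]; move: x_lt0; rewrite -e; lia. Qed.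

Lemma PrFF_nil_neq0 k' x y : x != 0 -> PrFF mu 0 k' x y = 0.
Proof.
move=> x_neq0; apply: fsbig1 => -[f g] [[/= /size0nil -> _] _ e _].
by move: x_neq0; rewrite -e fsize_nil.
Qed.

Lemma PrFF_single y : PrFF mu 0 1 0 y%:Z = PrT mu (fun t => tree_size t = y).
Proof.
rewrite /PrFF (reindex_fsbig (fun t : ptree => ([::] : seq ptree, [:: t]))
                [set t | is_tree t /\ tree_size t = y]).
  apply: eq_fsbigr => t _.
  by rewrite /= forest_weight_cons !forest_weight_nil mul1r mulr1.
split.
- move=> t [Ht ts]; split=> //=; rewrite ?fsize_cons ?fsize_nil ?addn0 ?ts //.
  by split=> // u; rewrite inE => /eqP ->.
- by move=> t u _ _ [].
move=> [f g] [[/= /size0nil -> _] [/= sg Hg] _ eg].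
case: g sg Hg eg => [|t [|u g]] //= _ Hg eg; exists t => //.
by split; [exact/Hg/mem_head | move: eg; rewrite fsize_cons fsize_nil addn0; lia].
Qed.

Lemma vertex_lineage_prob_root y a : sumI K a = 0%N ->
  vertex_lineage_prob mu K 0 y a = PrT mu (fun t => tree_size t = y).
Proof.
move=> /sumI_eq0 a0; apply: eq_fsbigl; apply/seteqP; split=> t [Ht H]; first by case: H.
split=> //; split=> // k j kj kK.
by rewrite vertex_tree0 // a0 // mem_index_pairs kj kK.
Qed.

Lemma vertex_lineage_prob_root_eq0 y a : sumI K a != 0%N ->
  vertex_lineage_prob mu K 0 y a = 0.
Proof.
move=> sa; apply: fsbig1 => t [Ht [_ L]]; move/negP: sa; case.
rewrite -sumI_mul1 sumI_lin_eq0 // => k j; rewrite mem_index_pairs => /andP[kj kK].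
by rewrite -L // vertex_tree0.
Qed.

Theorem vertex_lineage_prob_formula h x y a : sumI K a = h -> (0 < y)%N ->
  vertex_lineage_prob mu K x y a =
  Qh mu K h a * PrFF mu (N1 K a) (1 + N2 K a) (x%:Z - h%:Z) y.
Proof.
elim: h x y a => [|h IH] [|x] y a sa y_gt0.
- rewrite Qh0 ?mul1r /N1 /N2 ?sumI_lin_eq0; try exact: sumI_eq0.
  by rewrite vertex_lineage_prob_root // PrFF_single.
- rewrite /N1 sumI_lin_eq0 ?PrFF_nil_neq0 ?mulr0 //; last exact: sumI_eq0.
  rewrite vertex_lineage_prob_succ //; apply: big1_seq => -[k j] /andP[_ pK] /=.
  by rewrite (sumI_eq0 sa).
- by rewrite PrFF_lt0 ?mulr0 ?vertex_lineage_prob_root_eq0 ?sa //; lia.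
rewrite vertex_lineage_prob_succ // -(Qh_succ mu sa) big_distrl /=.
apply: eq_big_seq => -[k j] pK /=; case: ifP => ap; last by rewrite mul0r.
have sd : sumI K (decr a k j) = h by move: sa; rewrite (sumI_decr1 pK ap) => -[].
have -> : x.+1%:Z - h.+1%:Z = x%:Z - h%:Z by lia.
rewrite (N1_decr pK ap) (N2_decr pK ap) addnA -PrFF_convolution // mulr_fsumr.
rewrite mulr_fsumr; apply: eq_fsbigr => q; rewrite inE => -[_ _ _ b2].
by rewrite IH ?subn_gt0 //; ring.
Qed.

End LineageFormula.

Theorem proposition5 (R : realType) (mu : nat -> R) (K : nat)
  (* (H1) *)
  (mu_ge0 : forall k, 0 <= mu k)
  (K_gt0 : (0 < K)%N)
  (mu_supp : forall k, (K < k)%N -> mu k = 0)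
  (mu_sum : \sum_(0 <= k < K.+1) mu k = 1)
  (mu_crit : \sum_(0 <= k < K.+1) k%:R * mu k = 1)
  (mu_nondeg : mu 0%N + mu 1%N != 1)
  (n : nat) (hn : 0 < PrT mu (fun t => tree_size t = n.+1))
  (h : nat) (a : nat -> nat -> nat) (ha : sumI K a = h)
  (m : nat) (hm : (m <= n)%N) :
  PrT mu (fun t => tree_size t = n.+1 /\
            forall k j, (1 <= j <= k)%N -> (k <= K)%N ->
              lineage t (vertex t m) k j = a k j)
    / PrT mu (fun t => tree_size t = n.+1)
  = Qh mu K h a *
    PrFF mu (N1 K a) (1 + N2 K a) (m%:Z - h%:Z) (n.+1%:Z - m%:Z)
    / PrT mu (fun t => tree_size t = n.+1).
Proof.
(* Both sides are unnormalised, so of (H1) only [mu_supp] is needed. *)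
have nE : n.+1 = (m + (n.+1 - m))%N by rewrite subnKC // ltnW.
have -> : n.+1%:Z - m%:Z = (n.+1 - m)%N by lia.
rewrite -vertex_lineage_prob_formula ?subn_gt0 ?ltnS // /vertex_lineage_prob.
by rewrite -nE.
Qed.
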